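(* In the Hidden Hallucination algorithm described in the context, for every phase $\ell$, the censored ledger $\lambda_{\mathrm{cens},\ell}$ and the honest ledger $\lambda_{\mathrm{hon},\ell}$ are both hygienic; that is, for $\hat\lambda\in\{\lambda_{\mathrm{cens},\ell},\lambda_{\mathrm{hon},\ell}\}$, \[\Pr[\mu_\star\in\cdot\mid\hat\lambda]=\Pr_{\mathrm{can}}[\mu_\star\in\cdot\mid\hat\lambda],\] where the left side is the true Bayesian posterior of $\mu_\star$ given the realized value of the random ledger $\hat\lambda$ (including its policies and censoring set) generated by the algorithm and the agents' behavior.
   Context: MDPs. Fix positive integers $S,A,H$. An MDP model $\mu$ specifies for each triple $(x,a,h)\in[S]\times[A]\times[H]$ a reward distribution $R_\mu(x,a,h)$ on $[0,1]$ (all supported on a common countable set) with mean $r_\mu(x,a,h)$, transition distribution $p_\mu(\cdot\mid x,a,h)$ on $[S]$ and initial distribution $p_\mu(\cdot\mid0)$; an episode generates a trajectory $(x_h,a_h,r_h,h)_{h\in[H]}$ with $x_1\sim p_\mu(\cdot\mid0)$, $r_h\sim R_\mu(x_h,a_h,h)$, $x_{h+1}\sim p_\mu(\cdot\mid x_h,a_h,h)$. $\Pi_{\mathrm{mkv}}$ is the set of deterministic Markov policies $\pi:[S]\times[H]\to[A]$; $V(\pi,\mu)$ is the expected total reward. Incentivized RL. A prior $\mathbf{p}$ over models is known to all; $\mu_\star\sim\mathbf{p}$. In each episode $k$ the principal chooses a signal $\sigma_k$ via a known algorithm; agent $k$ chooses $\pi_k\in\arg\max_{\pi\in\Pi_{\mathrm{mkv}}}\mathbb{E}[V(\pi,\mu_\star)\mid\sigma_k]$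 (fixed known tie-breaking); $\pi_k$ is run in $\mu_\star$ producing trajectory $\tau_k$ observed by the principal. Ledgers and canonical posteriors. A ledger $\lambda$ consists of a censoring set $\mathcal{U}_\lambda\subseteq[S]\times[A]\times[H]$ and a finite sequence $(\pi_i,\tau_i)_{i=1}^m$ of policies and trajectories with the rewards at stages $h$ with $(x_h,a_h,h)\in\mathcal{U}_\lambda$ removed. The canonical posterior $\Pr_{\mathrm{can}}[\cdot\mid\lambda]$ is the conditional law of $\mu_\star$ given $\hat\lambda'=\lambda$, where $\mu_\star\sim\mathbf{p}$ and $\hat\lambda'$ is obtained by running each of the fixed (treated as non-random) policies $\pi_1,\dots,\pi_m$ once, independently, in $\mu_\star$ and removing rewards at triples in $\mathcal{U}_\lambda$. Algorithm (Hidden Hallucination), inputs $N_{\mathrm{ph}},n_{\mathrm{lrn}},\varepsilon_{\mathrm{pun}}$. Phase $\ell$ = episodes $(\ell-1)N_{\mathrm{ph}}+1,\dots,\ell N_{\mathrm{ph}}$, hallucination episode $k_\ell$ uniform in the phase. $\mathcal{U}_\ell$ = set of triples visited in fewer than $n_{\mathrm{lrn}}$ of the episodes $k_1,\dots,k_{\ell-1}$ (under-explored); other triples are fully explored. $\lambda_{\mathrm{cens},\ell}$: the pairs $(\pi_{k_j},\tau_{k_j})_{j<\ell}$ with all rewards removed; $\lambda_{\mathrm{hon},\ell}$: the same pairs with censoring set $\mathcal{U}_\ell$. Punish event $\mathcal{E}_{\mathrm{pun},\ell}=\{r_{\mu_\star}(x,a,h)\le\varepsilon_{\mathrm{pun}}\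 \forall(x,a,h)\notin\mathcal{U}_\ell\}$. At $k=k_\ell$: draw $\mu_{\mathrm{hal},\ell}$ from the posterior of $\mu_\star$ given $\lambda_{\mathrm{cens},\ell}$ and $\mathcal{E}_{\mathrm{pun},\ell}$, and form $\lambda_{\mathrm{hal},\ell}$ with censoring set $\mathcal{U}_\ell$ and each occurrence of a fully explored triple $(x,a,h)$ given an independent reward from $R_{\mu_{\mathrm{hal},\ell}}(x,a,h)$. The signal is $\lambda_{\mathrm{hal},\ell}$ at $k=k_\ell$ and $\lambda_{\mathrm{hon},\ell}$ otherwise in phase $\ell$. *)

From HB Require Import structures.
From mathcomp Require Import all_boot all_order all_algebra.
From mathcomp Require Import all_classical all_reals.
From mathcomp Require Import ereal topology normedtype sequences esum measure lebesgue_measure lebesgue_integral probability.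

Set Implicit Arguments.
Unset Strict Implicit.
Unset Printing Implicit Defensive.
Import Order.TTheory GRing.Theory Num.Theory.
Local Open Scope ring_scope.
Local Open Scope classical_set_scope.

Section MDP.
Variables (R : realType) (S A H : nat).

Definition Triple := ('I_S * 'I_A * 'I_H)%type.
Definition Pol := {ffun 'I_S * 'I_H -> 'I_A}.

(** An MDP model.  Rewards take values in the common countable set
    [{ rv k | k : nat }], so a reward distribution is a pmf on nat. *)
Record model := Model {
  init : 'I_S -> R;
  trans : 'I_S -> 'I_A -> 'I_H -> 'I_S -> R;
  rew : 'I_S -> 'I_A -> 'I_H -> nat -> R
}.

Definition valid_model (m : model) : Prop :=
  [/\ (forall x, 0 <= init m x) /\ \sum_x init m x = 1,
      (forall x a h y, 0 <= trans m x a h y),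
      (forall x a h, \sum_y trans m x a h y = 1),
      (forall x a h k, 0 <= rew m x a h k) &
      (forall x a h, (\sum_(k <oo) (rew m x a h k)%:E)%E = 1%E)].

Variable rv : nat -> R.  (* reward value of index k, in [0,1] *)

Definition meanrew (m : model) (x : 'I_S) (a : 'I_A) (h : 'I_H) : R :=
  fine (\sum_(k <oo) ((rew m x a h k * rv k)%:E))%E.

Definition pathprob (m : model) (pi : Pol) (xs : {ffun 'I_H -> 'I_S}) : R :=
  (\prod_(i < H | (i == 0%N :> nat)) init m (xs i)) *
  \prod_(i < H) \prod_(j < H | (j == i.+1 :> nat)) trans m (xs i) (pi (xs i, i)) i (xs j).

Definition value (pi : Pol) (m : model) : R :=
  \sum_(xs : {ffun 'I_H -> 'I_S})
     pathprob m pi xs * \sum_(i < H) meanrew m (xs i) (pi (xs i, i)) i.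

(** trajectories (x_h, a_h, r_h)_h ; r_h is a reward index *)
Definition Step := ('I_S * 'I_A * nat)%type.
Definition Traj := (H.-tuple Step)%type.
Definition CStep := ('I_S * 'I_A * option nat)%type.
Definition CTraj := (H.-tuple CStep)%type.

(** ledger: censoring set and sequence of (policy, reward-censored trajectory) *)
Definition ledger := ({set Triple} * seq (Pol * CTraj))%type.

Definition triple_at (tau : Traj) (i : 'I_H) : Triple :=
  ((tnth tau i).1.1, (tnth tau i).1.2, i).

Definition censor (U : {set Triple}) (tau : Traj) : CTraj :=
  [tuple (((tnth tau i).1.1, (tnth tau i).1.2,
           if triple_at tau i \in U then None else Some (tnth tau i).2) : CStep) | i < H].

Definition trajprob (m : model) (pi : Pol) (tau : Traj) : R :=
  (\prod_(i < H | (i == 0%N :> nat)) init m (tnth tau i).1.1) *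
  (\prod_(i < H) (((tnth tau i).1.2 == pi ((tnth tau i).1.1, i))%:R *
                  rew m (tnth tau i).1.1 (tnth tau i).1.2 i (tnth tau i).2)) *
  \prod_(i < H) \prod_(j < H | (j == i.+1 :> nat))
      trans m (tnth tau i).1.1 (tnth tau i).1.2 i (tnth tau j).1.1.

Definition cprob (m : model) (U : {set Triple}) (pi : Pol) (c : CTraj) : \bar R :=
  (\esum_(tau in [set tau : Traj | censor U tau = c]) (trajprob m pi tau)%:E)%E.

(** likelihood of ledger lam under the canonical sampling: each policy run once,
    independently, rewards at triples of the censoring set removed *)
Definition can_lik (m : model) (lam : ledger) : \bar R :=
  (\prod_(p <- lam.2) cprob m lam.1 p.1 p.2)%E.

Variables (d : measure_display) (M : measurableType d) (P : probability M R)
          (mdl : M -> model).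

Definition can_post (lam : ledger) (B : set M) : R :=
  fine (\int[P]_(y in B) can_lik (mdl y) lam)%E /
  fine (\int[P]_(y in setT) can_lik (mdl y) lam)%E.

Variables (Nph nlrn : nat) (epsp : R) (tb : {set Pol} -> Pol).

(** one record per phase: offset of the hallucination episode k_l in the phase,
    the signal lambda_hal given to agent k_l, its policy, and its trajectory *)
Definition rec := ('I_Nph * ledger * Pol * Traj)%type.
Definition r_off (r : rec) : 'I_Nph := r.1.1.1.
Definition r_sig (r : rec) : ledger := r.1.1.2.
Definition r_pol (r : rec) : Pol := r.1.2.
Definition r_traj (r : rec) : Traj := r.2.

Definition visited (tau : Traj) (t : Triple) : bool := triple_at tau t.2 == t.

Definition Ucal (h : seq rec) : {set Triple} :=
  [set t | (count (fun r => visited (r_traj r) t) h < nlrn)%N].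

Definition cens_ledger (h : seq rec) : ledger :=
  ([set: Triple]%SET, [seq (r_pol r, censor [set: Triple]%SET (r_traj r)) | r <- h]).

Definition hon_ledger (h : seq rec) : ledger :=
  (Ucal h, [seq (r_pol r, censor (Ucal h) (r_traj r)) | r <- h]).

Definition pattern (c : CTraj) : seq ('I_S * 'I_A * bool) :=
  [seq (s.1.1, s.1.2, s.2 != None) | s <- c].

(** probability, when mu_hal = m, that the hallucinated ledger equals sig *)
Definition halprob (m : model) (h : seq rec) (sig : ledger) : R :=
  if (sig.1 == Ucal h) &&
     ([seq (p.1, pattern p.2) | p <- sig.2] ==
      [seq (r_pol r, pattern (censor (Ucal h) (r_traj r))) | r <- h])
  then \prod_(p <- sig.2) \prod_(i < H)
         (if (tnth p.2 i).2 is Some k then rew m (tnth p.2 i).1.1 (tnth p.2 i).1.2 i k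
          else 1)
  else 0.

Definition Epun (U : {set Triple}) : set M :=
  [set y | forall t : Triple, t \notin U -> meanrew (mdl y) t.1.1 t.1.2 t.2 <= epsp].

Section Step.
(** W : density (w.r.t. the prior) of the histories of length n, i.e.
    Pr[mu_star in B, history = h] = int_B W h dP. *)
Variables (W : seq rec -> M -> \bar R) (n : nat).

(** law of lambda_hal in phase n+1 given the history h (length n): mu_hal is drawn
    from the posterior of mu_star given lambda_cens and E_pun (from the prior if this
    event has probability 0) *)
Definition Qhal (h : seq rec) (sig : ledger) : R :=
  let D := [set h' : seq rec | size h' = n /\ cens_ledger h' = cens_ledger h] in
  let E := Epun (Ucal h) in
  let den := (\esum_(h' in D) \int[P]_(y in E) W h' y)%E in
  let num := (\esum_(h' in D) \int[P]_(y in E) ((halprob (mdl y) h sig)%:E * W h' y))%E in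
  if den == 0%E then fine (\int[P]_(y in setT) (halprob (mdl y) h sig)%:E)%E
  else fine num / fine den.

(** E[ f(mu_star) ; sigma_k = s ] for an episode k of phase n+1 *)
Definition sigjoint (s : ledger) (f : M -> \bar R) : \bar R :=
  (\esum_(h in [set h : seq rec | size h = n])
     ((((Nph%:R)^-1 * Qhal h s)%:E * \int[P]_(y in setT) (f y * W h y)) +
      (if hon_ledger h == s
       then ((Nph.-1)%:R / Nph%:R)%:E * \int[P]_(y in setT) (f y * W h y)
       else 0)))%E.

Definition condexp (s : ledger) (f : M -> \bar R) : R :=
  fine (sigjoint s f) / fine (sigjoint s (fun _ => 1%E)).

Definition agent (s : ledger) : Pol :=
  tb [set pi : Pol | [forall pi' : Pol,
        condexp s (fun y => (value pi' (mdl y))%:E) <=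
        condexp s (fun y => (value pi (mdl y))%:E)]].

Definition stepw (h : seq rec) (r : rec) (y : M) : \bar R :=
  ((Nph%:R)^-1 * Qhal h (r_sig r) * (r_pol r == agent (r_sig r))%:R *
   trajprob (mdl y) (r_pol r) (r_traj r))%:E.
End Step.

Fixpoint Wfun (n : nat) : seq rec -> M -> \bar R :=
  match n with
  | 0 => fun h _ => if h is [::] then 1%E else 0%E
  | n'.+1 => fun h y =>
      if size h == n'.+1 then
        match drop n' h with
        | [:: r] => (Wfun n' (take n' h) y * stepw (Wfun n') n' (take n' h) r y)%E
        | _ => 0%E
        end
      else Wfun n' h y
  end.

Definition W (h : seq rec) (y : M) : \bar R := Wfun (size h) h y.

Definition joint (L : seq rec -> ledger) (l : nat) (lam : ledger) (B : set M) : \bar R :=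
  (\esum_(h in [set h : seq rec | size h = l.-1 /\ L h = lam]) \int[P]_(y in B) W h y)%E.

Definition true_post (L : seq rec -> ledger) (l : nat) (lam : ledger) (B : set M) : R :=
  fine (joint L l lam B) / fine (joint L l lam setT).

End MDP.

From HB Require Import structures.
From mathcomp Require Import all_boot all_order all_algebra.
From mathcomp Require Import all_classical all_reals.
From mathcomp Require Import ereal topology normedtype sequences esum measure lebesgue_measure lebesgue_integral probability.
From mathcomp Require Import measurable_realfun.

(* The joint law of mu_star and the history of hallucination episodes has a
   density with respect to the prior that is a product over episodes of two
   factors: the probability that the agent received its signal and chose its
   policy, and the probability of the trajectory it produced.  The first factor
   depends on the past only through the ledger itself (the censored trajectories
   determine the visited state-action pairs, hence U_l, lambda_cens,l and the
   reward pattern of the hallucinated signal), and not on mu_star.  Summing over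
   all histories with a given ledger thus turns the trajectory factors into the
   canonical censored likelihoods and the choice factors into a constant, so the
   joint law of mu_star and the ledger is a constant multiple of the prior times
   the canonical likelihood.  The constant is finite because, the hallucinated
   rewards being drawn from pmfs, the hallucinated signal has total mass at most 1. *)

Set Implicit Arguments.
Unset Strict Implicit.
Unset Printing Implicit Defensive.
Import Order.TTheory GRing.Theory Num.Theory.
Local Open Scope ring_scope.
Local Open Scope classical_set_scope.

Section esum_facts.
Context {R : realType}.
Local Open Scope ereal_scope.

Lemma esum_pickle (T : countType) (I : set T) (a : T -> \bar R) :
  (forall t, I t -> 0 <= a t) ->
  \esum_(t in I) a t =
  \sum_(n <oo) oapp (fun t => if t \in I then a t else 0) 0 (pickle_inv n).
Proof.
move=> a0; rewrite esum_mkcond.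
set b := fun n : nat => oapp (fun t => if t \in I then a t else 0) 0 (pickle_inv n).
have b0 n : 0 <= b n.
  by rewrite /b; case: (pickle_inv n) => [t|] //=; case: ifPn => // /[!inE]; exact: a0.
rewrite nneseries_esumT // (esumID (range (@pickle T)) [set: nat]) ?setTI; last first.
  by move=> n _; exact: b0.
rewrite [X in _ + X]esum1 ?adde0; last first.
  move=> n not_pickled; rewrite /b; case En: (pickle_inv n) => [t|] //=.
  by exfalso; apply: not_pickled; exists t => //; rewrite -[RHS](@pickle_invK T n) En.
rewrite esum_image; last by move=> s t _ _ /(pcan_inj (@pickleK_inv T)).
by apply: eq_esum => t _; rewrite /b pickleK_inv.
Qed.

Lemma le_esum_subset (T : choiceType) (I J : set T) (a : T -> \bar R) :
  I `<=` J -> (forall t, J t -> 0 <= a t) ->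
  \esum_(t in I) a t <= \esum_(t in J) a t.
Proof.
move=> IJ a0; rewrite (esum_mkcond I) (esum_mkcond J); apply: le_esum => t _.
have [It|nIt] := boolP (t \in I); first by rewrite ifT // inE; apply: IJ; rewrite -inE.
by case: ifPn => // /[!inE]; exact: a0.
Qed.

Lemma esum_ge_term (T : choiceType) (I : set T) (a : T -> \bar R) t :
  (forall t, I t -> 0 <= a t) -> I t -> a t <= \esum_(i in I) a i.
Proof.
move=> a0 It; apply: esum_ge; exists [set t]; last by rewrite fsbig_set1.
by split; [exact: finite_set1 | move=> x ->].
Qed.

Lemma esumZl (T : countType) (I : set T) (a : T -> \bar R) (c : R) :
  (0 <= c)%R -> (forall t, I t -> 0 <= a t) ->
  \esum_(t in I) (c%:E * a t) = c%:E * \esum_(t in I) a t.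
Proof.
move=> c0 a0; rewrite !esum_pickle //; last by move=> t It; rewrite mule_ge0 // a0.
rewrite -nneseriesZl; last first.
  by move=> n _; case: (pickle_inv n) => [t|] //=; case: ifPn => // /[!inE]; exact: a0.
apply: eq_eseriesr => n _; case: (pickle_inv n) => [t|] /=; last by rewrite mule0.
by case: ifPn; rewrite ?mule0.
Qed.

Lemma esumMl (T : countType) (I : set T) (a : T -> \bar R) (c : \bar R) :
  0 <= c -> (forall t, I t -> 0 <= a t) ->
  \esum_(t in I) (c * a t) = c * \esum_(t in I) a t.
Proof.
move=> + a0; case: c => [c c0|_|]; last by rewrite leNgt ltNyr.
  by rewrite esumZl.
have [sum0|] := eqVneq (\esum_(t in I) a t) 0.
  rewrite sum0 mule0 esum1 // => t It.
  suff -> : a t = 0 by rewrite mule0.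
  by apply/eqP; rewrite eq_le a0 // andbT -sum0 esum_ge_term.
move=> sum_neq0; have sum_gt0 : 0 < \esum_(t in I) a t.
  by rewrite lt_def sum_neq0 esum_ge0.
have [t It at_gt0] : exists2 t, I t & 0 < a t.
  apply/not_exists2P => a_le0; move: sum_gt0; rewrite esum1 ?ltxx // => t It.
  by have [//|/negP] := a_le0 t; rewrite lt_def a0 // andbT negbK => /eqP.
rewrite gt0_mulye //; apply/eqP; rewrite eq_le leey /=.
have := @esum_ge_term _ I (fun i => +oo * a i) t _ It; rewrite gt0_mulye //; apply.
by move=> i Ii; rewrite mule_ge0 // a0.
Qed.

Lemma esumMr (T : countType) (I : set T) (a : T -> \bar R) (c : \bar R) :
  0 <= c -> (forall t, I t -> 0 <= a t) ->
  \esum_(t in I) (a t * c) = (\esum_(t in I) a t) * c.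
Proof.
by move=> c0 a0; rewrite muleC -esumMl //; apply: eq_esum => t _; rewrite muleC.
Qed.

Lemma esum_mul (T1 T2 : countType) (I : set T1) (J : set T2)
    (a : T1 -> \bar R) (b : T2 -> \bar R) :
  (forall i, I i -> 0 <= a i) -> (forall j, J j -> 0 <= b j) ->
  \esum_(k in I `*`` (fun=> J)) (a k.1 * b k.2) =
  (\esum_(i in I) a i) * \esum_(j in J) b j.
Proof.
move=> a0 b0; rewrite -(esum_esum (a := fun i j => a i * b j)); last first.
  by move=> i j Ii Jj; rewrite mule_ge0 ?a0 ?b0.
under eq_esum => i Ii do rewrite (esumMl (a0 i Ii) b0).
by rewrite esumMr //; apply: esum_ge0.
Qed.

Lemma exchange_esum (T1 T2 : choiceType) (I : set T1) (J : set T2)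
    (a : T1 -> T2 -> \bar R) :
  (forall i j, I i -> J j -> 0 <= a i j) ->
  \esum_(i in I) \esum_(j in J) a i j = \esum_(j in J) \esum_(i in I) a i j.
Proof.
move=> a0; rewrite (esum_esum (J := fun=> J)) //.
rewrite (esum_esum (J := fun=> I)); last by move=> j i Jj Ii; exact: a0.
rewrite (reindex_esum (J `*`` fun=> I) _ (fun k => (k.2, k.1))) //.
split=> [[j i] [/= Jj Ii]|[j i] [j' i'] _ _ /= [-> ->]|[i j] [/= Ii Jj]] //.
by exists (j, i).
Qed.

Lemma esum_map_cons (X : choiceType) (Y : eqType) (g : X -> Y) y q
    (a : seq X -> \bar R) :
  (forall s, 0 <= a s) ->
  \esum_(s in [set s | map g s = y :: q]) a s =
  \esum_(x in [set x | g x = y]) \esum_(s in [set s | map g s = q]) a (x :: s).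
Proof.
move=> a0; rewrite (esum_esum (a := fun x s => a (x :: s))) //.
apply: reindex_esum; split=> [[x s] [/= -> ->]|[x s] [x' s'] _ _ /= [-> ->]|] //.
by case=> [|x s] //= [gx gs]; exists (x, s).
Qed.

Lemma esum_map_rcons (X : choiceType) (Y : eqType) (g : X -> Y) y q
    (a : seq X -> \bar R) :
  (forall s, 0 <= a s) ->
  \esum_(s in [set s | map g s = rcons q y]) a s =
  \esum_(x in [set x | g x = y]) \esum_(s in [set s | map g s = q]) a (rcons s x).
Proof.
move=> a0; rewrite (esum_esum (a := fun x s => a (rcons s x))) //.
apply: reindex_esum; split=> [[x s] /= [gx gs]|[x s] [x' s'] _ _ /= /rcons_inj[-> ->]|] //.
  by rewrite map_rcons gx gs.
case/lastP=> [|s x]; first by case: q.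
by rewrite /= map_rcons => /rcons_inj[gs gx]; exists (x, s).
Qed.

End esum_facts.

Fixpoint prod_from {R : numDomainType} {X : Type} (w : nat -> X -> R) (k : nat)
    (s : seq X) : R :=
  if s is x :: s' then w k x * prod_from w k.+1 s' else 1.

Section prod_from.
Context {R : numDomainType}.

Lemma prod_from_ge0 (X : Type) (w : nat -> X -> R) k s :
  (forall k x, 0 <= w k x) -> 0 <= prod_from w k s.
Proof. by move=> w0; elim: s k => [|x s IH] k //=; rewrite mulr_ge0. Qed.

Lemma prod_from_const (X : Type) (f : X -> R) k s :
  prod_from (fun=> f) k s = \prod_(x <- s) f x.
Proof. by elim: s k => [|x s IH] k /=; rewrite ?big_nil ?big_cons ?IH. Qed.

Lemma prod_fromE (X : Type) (x0 : X) (w : nat -> X -> R) k s :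
  prod_from w k s = \prod_(i < size s) w (k + i)%N (nth x0 s i).
Proof.
elim: s k => [|x s IH] k /=; first by rewrite big_ord0.
rewrite big_ord_recl addn0 IH; congr (_ * _).
by apply: eq_bigr => i _; rewrite lift0 addSnnS.
Qed.

Lemma prod_from_tuple (X : Type) n (t : n.-tuple X) (w : nat -> X -> R) :
  prod_from w 0 t = \prod_(i < n) w i (tnth t i).
Proof.
case: n t => [|n] t; first by rewrite tuple0 big_ord0.
rewrite (prod_fromE (tnth t ord0)) size_tuple.
by apply: eq_bigr => i _; rewrite add0n -tnth_nth.
Qed.

End prod_from.

Lemma esum_prod_from_le1 {R : realType} (X : countType) (Y : eqType) (g : X -> Y)
    (w : nat -> X -> R) :
  (forall k x, 0 <= w k x) ->
  (forall k y, (\esum_(x in [set x | g x = y]) (w k x)%:E <= 1)%E) ->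
  forall q k, (\esum_(s in [set s | map g s = q]) (prod_from w k s)%:E <= 1)%E.
Proof.
move=> w0 w_le1; elim=> [|y q IH] k.
  rewrite (_ : [set s | map g s = [::]] = [set [::]]).
    by rewrite esum_set1 ?lee_fin.
  by apply/seteqP; split=> [[]|s ->].
rewrite esum_map_cons => [|s]; last by rewrite lee_fin prod_from_ge0.
apply: le_trans (w_le1 k y); apply: le_esum => x _ /=.
under eq_esum do rewrite EFinM.
rewrite esumZl //; last by move=> s _; rewrite lee_fin prod_from_ge0.
by rewrite -[leRHS]mule1 lee_wpmul2l ?lee_fin.
Qed.

Section integral_esum.
Context d (M : measurableType d) (R : realType) (mu : {measure set M -> \bar R}).
Local Open Scope ereal_scope.

Lemma measurable_prod_cond (I : eqType) (s : seq I) (Q : pred I)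
    (F : I -> M -> R) (D : set M) :
  (forall i, measurable_fun D (F i)) ->
  measurable_fun D (fun y => (\prod_(i <- s | Q i) F i y)%R).
Proof.
move=> mF; under eq_fun do rewrite big_mkcond.
by apply: measurable_prod => i _; case: (Q i) => //; exact: measurable_cst.
Qed.

Lemma emeasurable_prod (I : Type) (s : seq I) (F : I -> M -> \bar R) (D : set M) :
  (forall i, measurable_fun D (F i)) ->
  measurable_fun D (fun y => \prod_(i <- s) F i y).
Proof.
move=> mF; elim: s => [|i s IH].
  by under eq_fun do rewrite big_nil; exact: measurable_cst.
by under eq_fun do rewrite big_cons; exact: emeasurable_funM.
Qed.

Lemma ge0_emeasurable_esum (T : countType) (I : set T) (F : T -> M -> \bar R)
    (D : set M) :
  (forall t, measurable_fun D (F t)) -> (forall t y, 0 <= F t y) ->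
  measurable_fun D (fun y => \esum_(t in I) F t y).
Proof.
move=> mF F0; under eq_fun do rewrite esum_pickle //.
apply: ge0_emeasurable_sum => [n y _ _|n _].
  by case: (pickle_inv n) => [t|] //=; case: ifPn.
case: (pickle_inv n) => [t|] /=; last exact: measurable_cst.
by case: (t \in I); [exact: mF | exact: measurable_cst].
Qed.

Lemma integral_esum (T : countType) (I : set T) (F : T -> M -> \bar R) (D : set M) :
  measurable D -> (forall t, measurable_fun D (F t)) -> (forall t y, 0 <= F t y) ->
  \int[mu]_(y in D) (\esum_(t in I) F t y) = \esum_(t in I) \int[mu]_(y in D) F t y.
Proof.
move=> mD mF F0; rewrite esum_pickle; last by move=> t _; exact: integral_ge0.
under eq_integral => y _ do rewrite esum_pickle //.
rewrite integral_nneseries //.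
- apply: eq_eseriesr => n _; case: (pickle_inv n) => [t|] /=; last exact: integral0.
  by case: ifPn => // _; exact: integral0.
- move=> n; case: (pickle_inv n) => [t|] /=; last exact: measurable_cst.
  by case: (t \in I); [exact: mF | exact: measurable_cst].
- by move=> n y _; case: (pickle_inv n) => [t|] //=; case: ifPn.
Qed.

Lemma le_esum_integral (T : countType) (g : T -> M -> \bar R) (F : M -> \bar R)
    (D : set M) :
  measurable D -> (forall t, measurable_fun setT (g t)) -> measurable_fun setT F ->
  (forall t y, 0 <= g t y) -> (forall y, 0 <= F y) ->
  (forall y, \esum_(t in [set: T]) g t y <= 1) ->
  \esum_(t in [set: T]) \int[mu]_(y in D) (g t y * F y) <= \int[mu]_(y in D) F y.
Proof.
move=> mD mg mF g0 F0 g_le1.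
have mgF t : measurable_fun D (fun y => g t y * F y).
  exact: measurable_funS measurableT (@subsetT _ D) (emeasurable_funM (mg t) mF).
rewrite -integral_esum // => [|t y]; last by rewrite mule_ge0.
apply: ge0_le_integral => //.
- by move=> y _; apply: esum_ge0 => t _; rewrite mule_ge0.
- by apply: ge0_emeasurable_esum => // t y; rewrite mule_ge0.
- exact: measurable_funS measurableT (@subsetT _ D) mF.
- by move=> y _; rewrite esumMr // -[leRHS]mul1e lee_wpmul2r ?g_le1.
Qed.

End integral_esum.

Section fine_facts.
Context {R : realType}.
Local Open Scope ereal_scope.

Lemma fine_EFinM (r : R) (x : \bar R) : fine (r%:E * x) = (r * fine x)%R.
Proof.
case: x => [x| |] //=; [rewrite mulry | rewrite mulrNy];
  have [r0|r0|->] := ltgtP r 0%R;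
  by rewrite ?(ltr0_sg r0) ?(gtr0_sg r0) ?sgr0 ?mulN1e ?mul1e ?mul0e /= mulr0.
Qed.

Lemma EFin_fine_le (x : \bar R) : 0 <= x -> (fine x)%:E <= x.
Proof. by case: x => [x| |] //= _; rewrite leey. Qed.

Lemma esum_fine_div_le1 (T : countType) (I : set T) (a : T -> \bar R) (x : \bar R) :
  (forall t, 0 <= a t) -> \esum_(t in I) a t <= x ->
  \esum_(t in I) (fine (a t) / fine x)%:E <= 1.
Proof.
move=> a0 sum_le_x.
have [fx0|fx_neq0] := eqVneq (fine x) 0%R.
  by rewrite esum1 // => t _; rewrite fx0 invr0 mulr0.
have x_fin : x \is a fin_num by case: x fx_neq0 sum_le_x => [x| |] //; rewrite eqxx.
have fx_ge0 : (0 <= fine x)%R by apply/fine_ge0/(le_trans _ sum_le_x)/esum_ge0.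
under eq_esum do rewrite mulrC EFinM.
rewrite esumZl ?invr_ge0 // => [|t _]; last by rewrite lee_fin fine_ge0.
rewrite -(mulVf fx_neq0) EFinM lee_wpmul2l ?lee_fin ?invr_ge0 //.
rewrite fineK //; apply: (le_trans _ sum_le_x).
by apply: le_esum => t _; exact: EFin_fine_le.
Qed.

End fine_facts.

Section hygiene.
Variables (R : realType) (S A H : nat) (rv : nat -> R)
  (d : measure_display) (M : measurableType d) (P : probability M R)
  (mdl : M -> model R S A H)
  (Nph nlrn : nat) (epsp : R) (tb : {set Pol S A H} -> Pol S A H).
Hypothesis rv_ge0 : forall k, 0 <= rv k.
Hypothesis valid : forall y, valid_model (mdl y).
Hypothesis minit : forall x, measurable_fun setT (fun y => init (mdl y) x).
Hypothesis mtrans :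
  forall x a i x', measurable_fun setT (fun y => trans (mdl y) x a i x').
Hypothesis mrew : forall x a i k, measurable_fun setT (fun y => rew (mdl y) x a i k).

Local Notation rec := (rec S A H Nph).
Local Notation Wfun := (@Wfun R S A H rv d M P mdl Nph nlrn epsp tb).
Local Notation W := (@W R S A H rv d M P mdl Nph nlrn epsp tb).
Local Notation Qhal := (Qhal rv P mdl nlrn epsp).
Local Notation agent := (agent rv P mdl nlrn epsp tb).
Local Notation Ucal := (Ucal nlrn).
Local Notation halprob := (halprob nlrn).

Lemma init_ge0 y x : 0 <= init (mdl y) x.
Proof. by case: (valid y) => -[]. Qed.

Lemma trans_ge0 y x a i x' : 0 <= trans (mdl y) x a i x'.
Proof. by case: (valid y). Qed.

Lemma rew_ge0 y x a i k : 0 <= rew (mdl y) x a i k.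
Proof. by case: (valid y). Qed.

Lemma esum_rew y x a i : (\esum_(k in [set: nat]) (rew (mdl y) x a i k)%:E = 1)%E.
Proof.
rewrite -nneseries_esumT => [|k]; last by rewrite lee_fin rew_ge0.
by case: (valid y) => _ _ _ _; apply.
Qed.

Lemma trajprob_ge0 y pi tau : 0 <= trajprob (mdl y) pi tau.
Proof.
rewrite !mulr_ge0 //; apply: prodr_ge0 => i _; first exact: init_ge0.
  by rewrite mulr_ge0 ?rew_ge0.
by apply: prodr_ge0 => j _; exact: trans_ge0.
Qed.

Lemma measurable_trajprob pi tau :
  measurable_fun setT (fun y => trajprob (mdl y) pi tau).
Proof.
apply: measurable_funM; first apply: measurable_funM.
- exact: measurable_prod_cond.
- apply: measurable_prod_cond => i.
  by apply: measurable_funM; [exact: measurable_cst | exact: mrew].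
- by apply: measurable_prod_cond => i; exact: measurable_prod_cond.
Qed.

Lemma cprob_ge0 y U pi c : (0 <= cprob (mdl y) U pi c)%E.
Proof. by apply: esum_ge0 => tau _; rewrite lee_fin trajprob_ge0. Qed.

Lemma measurable_cprob U pi c : measurable_fun setT (fun y => cprob (mdl y) U pi c).
Proof.
apply: ge0_emeasurable_esum => [tau|tau y]; last by rewrite lee_fin trajprob_ge0.
exact/measurable_EFinP/measurable_trajprob.
Qed.

Lemma can_lik_ge0 y lam : (0 <= can_lik (mdl y) lam)%E.
Proof. by apply: prode_ge0 => p _; exact: cprob_ge0. Qed.

Lemma measurable_can_lik lam : measurable_fun setT (fun y => can_lik (mdl y) lam).
Proof. by apply: emeasurable_prod => p; exact: measurable_cprob. Qed.

Lemma can_lik_rcons (m : model R S A H) U lam2 p :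
  can_lik m (U, rcons lam2 p) = (can_lik m (U, lam2) * cprob m U p.1 p.2)%E.
Proof. by rewrite /can_lik big_rcons. Qed.

Lemma esum_trajprob_censor (g f : M -> \bar R) (B : set M) U pi c :
  measurable B -> measurable_fun setT g -> measurable_fun setT f ->
  (forall y, 0 <= g y)%E -> (forall y, 0 <= f y)%E ->
  (\esum_(tau in [set tau | censor U tau = c])
     \int[P]_(y in B) (g y * ((trajprob (mdl y) pi tau)%:E * f y)) =
   \int[P]_(y in B) (g y * (cprob (mdl y) U pi c * f y)))%E.
Proof.
move=> mB mg mf g0 f0.
have t0 tau y : (0 <= (trajprob (mdl y) pi tau)%:E)%E by rewrite lee_fin trajprob_ge0.
rewrite -integral_esum // => [|tau|tau y]; last by rewrite !mule_ge0.
  apply: eq_integral => y _.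
  by rewrite esumMl ?esumMr // => tau _; rewrite mule_ge0.
apply: measurable_funS measurableT (@subsetT _ B) _.
by apply: emeasurable_funM => //; apply: emeasurable_funM => //;
  exact/measurable_EFinP/measurable_trajprob.
Qed.

Lemma measurable_meanrew x a i :
  measurable_fun setT (fun y => meanrew rv (mdl y) x a i).
Proof.
apply: (measurableT_comp (f := fine)) => //.
apply: ge0_emeasurable_sum => [k y _ _|k _]; first by rewrite lee_fin mulr_ge0 ?rew_ge0.
by apply/measurable_EFinP; apply: measurable_funM => //; exact: measurable_cst.
Qed.

Lemma measurable_Epun U : measurable (Epun rv mdl epsp U).
Proof.
rewrite (_ : Epun rv mdl epsp U = \bigcap_(t in [set t | t \notin U])
   (setT `&` (fun y => meanrew rv (mdl y) t.1.1 t.1.2 t.2) @^-1` `]-oo, epsp])).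
  apply: fin_bigcap_measurable => [|t _]; first exact: finite_finset.
  exact: measurable_meanrew (measurable_itv _).
apply/seteqP; split=> y /= Ey t tU; first by split=> //=; rewrite in_itv /= Ey.
by have [_] := Ey t tU; rewrite /= in_itv.
Qed.

Definition step_lik (m : model R S A H) (i : 'I_H) (cs : CStep S A) : R :=
  if cs.2 is Some k then rew m cs.1.1 cs.1.2 i k else 1.

(* [halprob m h sig] is the product of [reward_lik m] over the entries of [sig]
   when [sig] has the shape of the honest ledger, and 0 otherwise. *)
Definition reward_lik (m : model R S A H) (c : CTraj S A H) : R :=
  \prod_(i < H) step_lik m i (tnth c i).

Lemma step_lik_ge0 y i cs : 0 <= step_lik (mdl y) i cs.
Proof. by rewrite /step_lik; case: cs.2 => // k; exact: rew_ge0. Qed.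

Lemma reward_lik_ge0 y c : 0 <= reward_lik (mdl y) c.
Proof. by apply: prodr_ge0 => i _; exact: step_lik_ge0. Qed.

Lemma halprob_ge0 y (h : seq rec) sig : 0 <= halprob (mdl y) h sig.
Proof.
rewrite /halprob; case: ifP => // _; apply: prodr_ge0 => p _.
exact: reward_lik_ge0.
Qed.

Lemma measurable_halprob (h : seq rec) sig :
  measurable_fun setT (fun y => halprob (mdl y) h sig).
Proof.
rewrite /halprob; case: (_ && _); last exact: measurable_cst.
apply: measurable_prod_cond => p; apply: measurable_prod_cond => i /=.
by case: (tnth p.2 i).2 => [k|]; [exact: mrew | exact: measurable_cst].
Qed.

Definition step_pattern (cs : CStep S A) := (cs.1.1, cs.1.2, cs.2 != None).

(* Positions beyond the horizon get weight 0, so that the fibre bound required by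
   [esum_prod_from_le1] holds at every position. *)
Definition pos_lik y (k : nat) (cs : CStep S A) : R :=
  if insub k is Some i then step_lik (mdl y) i cs else 0.

Lemma pos_lik_ge0 y k cs : 0 <= pos_lik y k cs.
Proof. by rewrite /pos_lik; case: insub => // i; exact: step_lik_ge0. Qed.

Lemma esum_pos_lik y k ys :
  (\esum_(cs in [set cs | step_pattern cs = ys]) (pos_lik y k cs)%:E <= 1)%E.
Proof.
rewrite /pos_lik; case: insub => [i|]; last by rewrite esum1.
case: ys => [[x a] [|]].
  rewrite (_ : [set cs | _] = (fun r => (x, a, Some r)) @` [set: nat]).
    by rewrite esum_image ?esum_rew // => r r' _ _ [].
  apply/seteqP; split=> [[[x' a'] [r|]] //= [-> ->]|_ [r _ <-]] //.
  by exists r.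
rewrite (_ : [set cs | _] = [set (x, a, None)]); first by rewrite esum_set1.
by apply/seteqP; split=> [[[x' a'] [r|]] //= [-> ->]|_ ->].
Qed.

Lemma reward_lik_prod_from y (c : CTraj S A H) :
  reward_lik (mdl y) c = prod_from (pos_lik y) 0 c.
Proof. by rewrite prod_from_tuple; apply: eq_bigr => i _; rewrite /pos_lik valK. Qed.

Lemma esum_reward_lik y pt :
  (\esum_(c in [set c : CTraj S A H | pattern c = pt]) (reward_lik (mdl y) c)%:E
   <= 1)%E.
Proof.
under eq_esum do rewrite reward_lik_prod_from.
rewrite -(esum_image _ val (fun s => (prod_from (pos_lik y) 0 s)%:E)); last first.
  by move=> c c' _ _; exact: val_inj.
apply: le_trans (esum_prod_from_le1 (@pos_lik_ge0 y) (@esum_pos_lik y) pt 0).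
apply: le_esum_subset => [_ [c /= <- <-] //|s _].
by rewrite lee_fin prod_from_ge0 // => k cs; exact: pos_lik_ge0.
Qed.

Lemma esum_halprob y (h : seq rec) :
  (\esum_(sig in [set: ledger S A H]) (halprob (mdl y) h sig)%:E <= 1)%E.
Proof.
set U := Ucal h; set pt := [seq (r_pol r, pattern (censor U (r_traj r))) | r <- h].
pose gp (p : Pol S A H * CTraj S A H) := (p.1, pattern p.2).
rewrite (esumID [set sig : ledger S A H | sig.1 = U /\ map gp sig.2 = pt]); last first.
  by move=> sig _; rewrite lee_fin halprob_ge0.
rewrite [X in (_ + X)%E]esum1 ?adde0 => [|[U' L] [_ /= not_pt]]; last first.
  by rewrite /halprob /=; case: ifP => // /andP[/eqP ? /eqP ?]; exfalso; apply: not_pt.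
rewrite setTI (_ : [set sig | _] = pair U @` [set L | map gp L = pt]); last first.
  by apply/seteqP; split=> [[U' L] /= [-> gL]|_ [L /= gL <-]]; [exists L|].
rewrite esum_image => [|L L' _ _ [] //].
rewrite (eq_esum (b := fun L => (prod_from (fun=> fun p => reward_lik (mdl y) p.2) 0 L)%:E)).
  apply: esum_prod_from_le1 => [k p|k [pol c]]; first exact: reward_lik_ge0.
  rewrite (_ : [set p | gp p = (pol, c)] = pair pol @` [set c' | pattern c' = c]).
    by rewrite esum_image ?esum_reward_lik // => c1 c2 _ _ [].
  by apply/seteqP; split=> [[pol' c'] [/= -> pc]|_ [c' /= pc <-]]; [exists c'|rewrite /gp pc].
by move=> L /= gL; rewrite prod_from_const /halprob /= eqxx -/pt -gL eqxx.
Qed.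

Lemma Qhal_ge0 (Wg : seq rec -> M -> \bar R) n h sig :
  (forall h y, 0 <= Wg h y)%E -> 0 <= Qhal Wg n h sig.
Proof.
move=> Wg0; rewrite /Qhal; case: ifP => _.
  by apply: fine_ge0; apply: integral_ge0 => y _; rewrite lee_fin halprob_ge0.
apply: divr_ge0; apply: fine_ge0; apply: esum_ge0 => h' _;
  apply: integral_ge0 => y _ //.
by rewrite mule_ge0 // lee_fin halprob_ge0.
Qed.

Lemma esum_Qhal_le1 (Wg : seq rec -> M -> \bar R) n h :
  (forall h y, 0 <= Wg h y)%E -> (forall h, measurable_fun setT (Wg h)) ->
  (\esum_(sig in [set: ledger S A H]) (Qhal Wg n h sig)%:E <= 1)%E.
Proof.
move=> Wg0 mWg; rewrite /Qhal /=.
set D := [set h' : seq rec | _].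
set E := Epun rv mdl epsp (Ucal h).
set den := (\esum_(h' in D) \int[P]_(y in E) Wg h' y)%E.
have mhal sig : measurable_fun setT (fun y => (halprob (mdl y) h sig)%:E).
  exact/measurable_EFinP/measurable_halprob.
have hal0 sig y : (0 <= (halprob (mdl y) h sig)%:E)%E by rewrite lee_fin halprob_ge0.
have [_|_] := eqVneq den 0%E.
  apply: (@le_trans _ _ (\esum_(sig in [set: ledger S A H])
      \int[P]_(y in setT) ((halprob (mdl y) h sig)%:E * 1))%E).
    apply: le_esum => sig _; under [X in (_ <= X)%E]eq_integral do rewrite mule1.
    by apply: EFin_fine_le; exact: integral_ge0.
  apply: le_trans (le_esum_integral P measurableT mhal (measurable_cst _) hal0
    (fun=> lee01) (esum_halprob^~ h)) _.
  by rewrite integral_cst // mul1e probability_le1.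
(* Summed over all signals, the numerators are bounded by the denominator. *)
apply: esum_fine_div_le1 => [sig|].
  by apply: esum_ge0 => h' _; apply: integral_ge0 => y _; rewrite mule_ge0.
rewrite exchange_esum => [|sig h' _ _]; last first.
  by apply: integral_ge0 => y _; rewrite mule_ge0.
apply: le_esum => h' _.
apply: (le_esum_integral P (measurable_Epun _) mhal (mWg h') hal0 (Wg0 h')).
by move=> y; exact: esum_halprob.
Qed.

Lemma Wfun_ge0 n h y : (0 <= Wfun n h y)%E.
Proof.
elim: n h y => [|n IH] h y /=; first by case: h.
case: ifP => // _; case: (drop n h) => [|r [|]] //.
apply: mule_ge0 => //; rewrite lee_fin mulr_ge0 ?trajprob_ge0 //.
by rewrite !mulr_ge0 ?invr_ge0 ?ler0n ?Qhal_ge0.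
Qed.

Lemma measurable_Wfun n h : measurable_fun setT (Wfun n h).
Proof.
elim: n h => [|n IH] h /=; first by case: h => [|? ?]; exact: measurable_cst.
case: (size h == n.+1); last exact: IH.
case: (drop n h) => [|r [|? ?]]; try exact: measurable_cst.
apply: emeasurable_funM => //; apply/measurable_EFinP.
by apply: measurable_funM; [exact: measurable_cst | exact: measurable_trajprob].
Qed.

Lemma W_ge0 h y : (0 <= W h y)%E.
Proof. exact: Wfun_ge0. Qed.

Definition choice_prob (h : seq rec) (c : 'I_Nph * ledger S A H * Pol S A H) : R :=
  Nph%:R^-1 * Qhal (Wfun (size h)) (size h) h c.1.2 *
  (c.2 == agent (Wfun (size h)) (size h) c.1.2)%:R.

Lemma choice_prob_ge0 h c : 0 <= choice_prob h c.
Proof. by rewrite !mulr_ge0 ?invr_ge0 // Qhal_ge0 // => ? ?; exact: Wfun_ge0. Qed.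

Lemma W_rcons h r y :
  W (rcons h r) y =
  (W h y * (choice_prob h r.1 * trajprob (mdl y) (r_pol r) (r_traj r))%:E)%E.
Proof.
have drop_r : drop (size h) (rcons h r) = [:: r] by rewrite -cats1 drop_size_cat.
have take_h : take (size h) (rcons h r) = h by rewrite -cats1 take_size_cat.
by rewrite /W size_rcons /= size_rcons eqxx drop_r take_h.
Qed.

Lemma esum_choice_prob_fin h pol :
  (\esum_(o in [set: 'I_Nph * ledger S A H]) (choice_prob h (o, pol))%:E
   \is a fin_num)%E.
Proof.
rewrite ge0_fin_numE; last by apply: esum_ge0 => o _; rewrite lee_fin choice_prob_ge0.
rewrite (_ : [set: _] = [set: 'I_Nph] `*`` fun=> [set: ledger S A H]); last first.
  by apply/seteqP; split.
rewrite -(esum_esum (a := fun i sig => (choice_prob h (i, sig, pol))%:E)); last first.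
  by move=> i sig _ _; rewrite lee_fin choice_prob_ge0.
apply: (@le_lt_trans _ _ (\esum_(i in [set: 'I_Nph]) 1%E)).
  apply: le_esum => i _.
  apply: le_trans (esum_Qhal_le1 (size h) h (@Wfun_ge0 (size h)) (@measurable_Wfun (size h))).
  apply: le_esum => sig _; rewrite lee_fin /choice_prob /=.
  have q0 : 0 <= Qhal (Wfun (size h)) (size h) h sig.
    by apply: Qhal_ge0 => ? ?; exact: Wfun_ge0.
  have Nph_inv_le1 : Nph%:R^-1 <= 1 :> R.
    by rewrite invf_le1 ?ler1n ?ltr0n //; apply: leq_ltn_trans (ltn_ord i).
  have b_le1 : (pol == agent (Wfun (size h)) (size h) sig)%:R <= 1 :> R.
    by case: (_ == _).
  by rewrite mulrAC ler_piMl // mulr_ile1 ?invr_ge0 ?ler0n.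
rewrite esum_fset; [|exact: finite_finset|by move=> i _; exact: lee01].
by rewrite fsbig_finite ?sumEFin ?ltry //; exact: finite_finset.
Qed.

Definition entries (U : {set Triple S A H}) (h : seq rec) :
    seq (Pol S A H * CTraj S A H) :=
  [seq (r_pol r, censor U (r_traj r)) | r <- h].

Lemma censor_path U (tau : Traj S A H) i : (tnth (censor U tau) i).1 = (tnth tau i).1.
Proof. by rewrite tnth_mktuple /=; case: (tnth tau i).1. Qed.

Lemma eq_map_entries U h h' (T : Type) (F : rec -> T) :
  entries U h = entries U h' ->
  (forall r r', r_pol r = r_pol r' ->
     (forall i, (tnth (r_traj r) i).1 = (tnth (r_traj r') i).1) -> F r = F r') ->
  map F h = map F h'.
Proof.
elim: h h' => [|r h IH] [|r' h'] //= [pol_eq censor_eq /IH eq_rest] F_path.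
have Ec : censor U (r_traj r) = censor U (r_traj r') by apply: val_inj.
by rewrite eq_rest // (F_path r r') // => i; rewrite -!(censor_path U) Ec.
Qed.

Lemma Ucal_entries U h h' : entries U h = entries U h' -> Ucal h = Ucal h'.
Proof.
move=> E; apply/setP => t; rewrite !inE.
have visits : map (fun r => visited (r_traj r) t) h = map (fun r => visited (r_traj r) t) h'.
  by apply: (eq_map_entries E) => r r' _ path; rewrite /visited /triple_at path.
by have := congr1 (count id) visits; rewrite !count_map => ->.
Qed.

Lemma censor_setT_path (tau tau' : Traj S A H) :
  (forall i, (tnth tau i).1 = (tnth tau' i).1) ->
  censor [set: Triple S A H] tau = censor [set: Triple S A H] tau'.
Proof. by move=> path; apply: eq_from_tnth => i; rewrite !tnth_mktuple !inE path. Qed.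

Lemma pattern_censor_path V (tau tau' : Traj S A H) :
  (forall i, (tnth tau i).1 = (tnth tau' i).1) ->
  pattern (censor V tau) = pattern (censor V tau').
Proof.
move=> path; apply: (congr1 val (_ : map_tuple step_pattern (censor V tau) = _)).
apply: eq_from_tnth => i; rewrite !tnth_map !tnth_ord_tuple /step_pattern /triple_at /=.
by rewrite path; case: (_ \in V).
Qed.

Lemma Qhal_entries U (Wg : seq rec -> M -> \bar R) n h h' sig :
  entries U h = entries U h' -> Qhal Wg n h sig = Qhal Wg n h' sig.
Proof.
move=> E; have EU := Ucal_entries E.
have Ecens : cens_ledger h = cens_ledger h'.
  congr pair; apply: (eq_map_entries E) => r r' -> path.
  by rewrite (censor_setT_path path).
have Epat : [seq (r_pol r, pattern (censor (Ucal h') (r_traj r))) | r <- h] =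
            [seq (r_pol r, pattern (censor (Ucal h') (r_traj r))) | r <- h'].
  by apply: (eq_map_entries E) => r r' -> path; rewrite (pattern_censor_path _ path).
by rewrite /Qhal /halprob Ecens EU Epat.
Qed.

Lemma choice_prob_entries U h h' :
  entries U h = entries U h' -> choice_prob h = choice_prob h'.
Proof.
move=> E; have := congr1 size E; rewrite !size_map => sz.
by apply/funext => c; rewrite /choice_prob sz (Qhal_entries _ _ _ E).
Qed.

Definition history_mass U lam2 (B : set M) (f : M -> \bar R) : \bar R :=
  (\esum_(h in [set h | entries U h = lam2]) \int[P]_(y in B) (W h y * f y))%E.

Lemma history_mass_rcons U lam2 h0 r B f :
  entries U h0 = lam2 -> measurable B -> measurable_fun setT f ->
  (forall y, 0 <= f y)%E ->
  (\esum_(h in [set h | entries U h = lam2]) \int[P]_(y in B) (W (rcons h r) y * f y) =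
   (choice_prob h0 r.1)%:E *
   history_mass U lam2 B (fun y => (trajprob (mdl y) (r_pol r) (r_traj r))%:E * f y))%E.
Proof.
move=> Eh0 mB mf f0; rewrite /history_mass -esumZl ?choice_prob_ge0 // => [|h _].
  apply: eq_esum => h Eh.
  rewrite -ge0_integralZl_EFin ?choice_prob_ge0 //.
  - apply: eq_integral => y _.
    rewrite W_rcons (choice_prob_entries (etrans Eh (esym Eh0))) EFinM.
    by rewrite muleCA !muleA.
  - by move=> y _; rewrite !mule_ge0 ?W_ge0 ?lee_fin ?trajprob_ge0.
  - apply: measurable_funS measurableT (@subsetT _ B) _.
    apply: emeasurable_funM; first exact: measurable_Wfun.
    by apply: emeasurable_funM => //; exact/measurable_EFinP/measurable_trajprob.
by apply: integral_ge0 => y _; rewrite !mule_ge0 ?W_ge0 ?lee_fin ?trajprob_ge0.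
Qed.

Lemma history_mass_rcons_can_lik U lam2 pol c h0 (K : R) :
  entries U h0 = lam2 -> 0 <= K ->
  (forall B f, measurable B -> measurable_fun setT f -> (forall y, 0 <= f y)%E ->
     history_mass U lam2 B f =
     (K%:E * \int[P]_(y in B) (can_lik (mdl y) (U, lam2) * f y))%E) ->
  forall B f, measurable B -> measurable_fun setT f -> (forall y, 0 <= f y)%E ->
  history_mass U (rcons lam2 (pol, c)) B f =
  ((fine (\esum_(o in [set: 'I_Nph * ledger S A H]) (choice_prob h0 (o, pol))%:E) * K)%:E *
   \int[P]_(y in B) (can_lik (mdl y) (U, rcons lam2 (pol, c)) * f y))%E.
Proof.
move=> Eh0 K0 IH B f mB mf f0.
have mtf pi tau : measurable_fun setT (fun y => (trajprob (mdl y) pi tau)%:E * f y)%E.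
  by apply: emeasurable_funM => //; exact/measurable_EFinP/measurable_trajprob.
have tf0 pi tau y : (0 <= (trajprob (mdl y) pi tau)%:E * f y)%E.
  by rewrite mule_ge0 ?lee_fin ?trajprob_ge0.
rewrite /history_mass /entries esum_map_rcons => [|h]; last first.
  by apply: integral_ge0 => y _; rewrite mule_ge0 ?W_ge0.
rewrite (eq_esum (b := fun r => (choice_prob h0 r.1)%:E *
    (K%:E * \int[P]_(y in B) (can_lik (mdl y) (U, lam2) *
       ((trajprob (mdl y) (r_pol r) (r_traj r))%:E * f y))))%E); last first.
  move=> r _; apply: etrans (history_mass_rcons r Eh0 mB mf f0) _.
  by rewrite IH.
rewrite (reindex_esum ([set: 'I_Nph * ledger S A H] `*`` fun=> [set tau | censor U tau = c])
    _ (fun k => (k.1, pol, k.2))); last first.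
  split=> [[o tau] [_ /= ->] //|[o tau] [o' tau'] _ _ /= [-> ->] //|].
  by move=> [[o pol'] tau] /= [<- Etau]; exists (o, tau).
rewrite /= (esum_mul (a := fun o => (choice_prob h0 (o, pol))%:E)
  (b := fun tau => K%:E * \int[P]_(y in B) (can_lik (mdl y) (U, lam2) *
       ((trajprob (mdl y) pol tau)%:E * f y))))%E; last 2 first.
- by move=> o _; rewrite lee_fin choice_prob_ge0.
- move=> tau _; rewrite mule_ge0 ?lee_fin // integral_ge0 // => y _.
  by rewrite mule_ge0 ?can_lik_ge0.
rewrite -[X in (X * _)%E]fineK ?esum_choice_prob_fin // esumZl //; last first.
  by move=> tau _; apply: integral_ge0 => y _; rewrite mule_ge0 ?can_lik_ge0.
rewrite esum_trajprob_censor //; last 2 first.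
- exact: measurable_can_lik.
- by move=> y; exact: can_lik_ge0.
rewrite EFinM -muleA; congr (_ * (_ * _))%E; apply: eq_integral => y _.
by rewrite can_lik_rcons muleA.
Qed.

Lemma history_mass_can_lik U lam2 : exists2 K : R, 0 <= K &
  forall B f, measurable B -> measurable_fun setT f -> (forall y, 0 <= f y)%E ->
  history_mass U lam2 B f =
  (K%:E * \int[P]_(y in B) (can_lik (mdl y) (U, lam2) * f y))%E.
Proof.
elim/last_ind: lam2 => [|lam2 [pol c] [K K0 IH]].
  exists 1 => // B f mB mf f0.
  rewrite /history_mass (_ : [set h | entries U h = [::]] = [set [::]]); last first.
    by apply/seteqP; split=> [[]|_ ->].
  rewrite esum_set1 ?mul1e; last by apply: integral_ge0 => y _; rewrite mule_ge0 ?W_ge0.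
  by apply: eq_integral => y _; rewrite /can_lik big_nil.
have [[h0 Eh0]|no_h0] := pselect (exists h0, entries U h0 = lam2); last first.
  exists 0 => // B f mB mf f0; rewrite mul0e /history_mass esum1 // => h.
  case/lastP: h => [|h r] /=; first by move=> /(congr1 size); rewrite size_rcons.
  rewrite /entries map_rcons => /rcons_inj[Eh _].
  by exfalso; apply: no_h0; exists h.
eexists; last exact: history_mass_rcons_can_lik Eh0 K0 IH.
by rewrite mulr_ge0 // fine_ge0 // esum_ge0 // => o _; rewrite lee_fin choice_prob_ge0.
Qed.

Lemma true_post_can_post (L : seq rec -> ledger S A H) l lam (K : R) :
  (0 < joint rv P mdl nlrn epsp tb L l lam setT)%E ->
  (forall B, measurable B -> joint rv P mdl nlrn epsp tb L l lam B =
     K%:E * \int[P]_(y in B) can_lik (mdl y) lam)%E ->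
  forall B, measurable B ->
    true_post rv P mdl nlrn epsp tb L l lam B = can_post P mdl lam B.
Proof.
move=> joint_gt0 jointE B mB.
have K_neq0 : K != 0.
  by apply/eqP => K0; move: joint_gt0; rewrite jointE // K0 mul0e ltxx.
rewrite /true_post /can_post !jointE // !fine_EFinM.
by rewrite -mulf_div divff // mul1r.
Qed.

Lemma joint_can_lik (L : seq rec -> ledger S A H) l lam :
  (forall h, L h = ((L h).1, entries (L h).1 h)) ->
  (forall h h', entries (L h').1 h = entries (L h').1 h' -> (L h).1 = (L h').1) ->
  exists K : R, forall B, measurable B ->
    joint rv P mdl nlrn epsp tb L l lam B =
    (K%:E * \int[P]_(y in B) can_lik (mdl y) lam)%E.
Proof.
move=> L_entries L_det.
have [[h0 [sz0 <-]]|no_h0] := pselect (exists h0, size h0 = l.-1 /\ L h0 = lam);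
  last first.
  exists 0 => B _; rewrite mul0e /joint esum1 // => h [sz Eh].
  by exfalso; apply: no_h0; exists h.
have snd_entries h : (L h).2 = entries (L h).1 h by rewrite {1}L_entries.
have [K _ HK] := history_mass_can_lik (L h0).1 (entries (L h0).1 h0).
exists K => B mB; rewrite /joint.
rewrite (_ : [set h | _ /\ _] = [set h | entries (L h0).1 h = entries (L h0).1 h0]).
  have := HK B (cst 1%E) mB (measurable_cst _) (fun=> lee01).
  rewrite /history_mass -L_entries => HK1; apply: etrans (etrans _ HK1) _.
    by apply: eq_esum => h _; apply: eq_integral => y _; rewrite mule1.
  by congr (_ * _)%E; apply: eq_integral => y _; rewrite mule1.
apply/seteqP; split=> h /=.
  by move=> [_ Eh]; rewrite -Eh -snd_entries Eh snd_entries.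
move=> Eh; split; first by have := congr1 size Eh; rewrite !size_map sz0.
by rewrite [L h]L_entries [L h0]L_entries (L_det _ _ Eh) Eh.
Qed.

(* A ledger map is hygienic as soon as it records the entries of the history under
   a censoring set that these entries determine. *)
Lemma hygienic_ledger (L : seq rec -> ledger S A H) :
  (forall h, L h = ((L h).1, entries (L h).1 h)) ->
  (forall h h', entries (L h').1 h = entries (L h').1 h' -> (L h).1 = (L h').1) ->
  forall l lam, (0 < joint rv P mdl nlrn epsp tb L l lam setT)%E ->
  forall B, measurable B ->
    true_post rv P mdl nlrn epsp tb L l lam B = can_post P mdl lam B.
Proof.
move=> L_entries L_det l lam joint_gt0.
have [K jointE] := joint_can_lik l lam L_entries L_det.
exact: true_post_can_post joint_gt0 jointE.
Qed.

End hygiene.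

Theorem lemma1 (R : realType) (S A H : nat) (rv : nat -> R)
  (d : measure_display) (M : measurableType d) (P : probability M R)
  (mdl : M -> model R S A H)
  (Nph nlrn : nat) (epsp : R) (tb : {set Pol S A H} -> Pol S A H) :
  (0 < S)%N -> (0 < A)%N -> (0 < H)%N -> (0 < Nph)%N ->
  (forall k, 0 <= rv k <= 1) ->
  (forall y, valid_model (mdl y)) ->
  (forall x, measurable_fun setT (fun y => init (mdl y) x)) ->
  (forall x a h x', measurable_fun setT (fun y => trans (mdl y) x a h x')) ->
  (forall x a h k, measurable_fun setT (fun y => rew (mdl y) x a h k)) ->
  (forall X : {set Pol S A H}, (0 < #|X|)%N -> tb X \in X) ->
  forall l : nat, (0 < l)%N ->
  forall lam : ledger S A H,
    ((0 < joint rv P mdl nlrn epsp tb (@cens_ledger S A H Nph) l lam setT)%E ->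
       forall B : set M, measurable B ->
         true_post rv P mdl nlrn epsp tb (@cens_ledger S A H Nph) l lam B
         = can_post P mdl lam B)
    /\
    ((0 < joint rv P mdl nlrn epsp tb (@hon_ledger S A H Nph nlrn) l lam setT)%E ->
       forall B : set M, measurable B ->
         true_post rv P mdl nlrn epsp tb (@hon_ledger S A H Nph nlrn) l lam B
         = can_post P mdl lam B).
Proof.
(* Hygiene holds for any agent behaviour. *)
move=> _ _ _ _ rv01 valid minit mtrans mrew _ l _ lam.
have rv_ge0 k : 0 <= rv k by case/andP: (rv01 k).
split; apply: (hygienic_ledger rv_ge0 valid minit mtrans mrew) => // h h'.
exact: Ucal_entries.
Qed.
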